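(* Consider the problem $$\min_{x_0\in\mathbb{R}^{n_0},\ldots,x_L\in\mathbb{R}^{n_L}}\ f(x_0,\ldots,x_L)+\sum_{l=1}^L\gamma_lT_{K_l,n_l,1}(x_l)+\delta_{\mathcal{C}}(x_0,\ldots,x_L),$$ where $\mathcal{C}\subset\mathrm{dom} f$ and $f+\delta_{\mathcal{C}}$ is directionally differentiable, and let $x^*=(x_0^*,\ldots,x_L^* )$ be a d-stationary point. Fix $l\in[L]$ and suppose: (B1) for every $x=(x_0,\ldots,x_L)\in\mathcal{C}$ and every $i\in[n_l]$, the direction $(0,\ldots,0,-(x_l)_ie_i,0,\ldots,0)$ (nonzero only in block $l$) belongs to $\mathcal{F}(x;\mathcal{C})$; (B2) there is $\Gamma_l>0$ such that $(f+\delta_{\mathcal C})'(x^*;(0,\ldots,d_l,\ldots,0))\le\Gamma_l$ for all $d_l\in\{-1,0,1\}^{n_l}$ with $\|d_l\|_1=1$ and $(0,\ldots,d_l,\ldots,0)\in\mathcal{F}(x^*;\mathcal{C})$. If $\gamma_l>\Gamma_l$, then $T_{K_l,n_l,1}(x_l^* )=0$.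
   Context: $T_{K,n,1}(x)$ is the sum of the $n-K$ smallest values among $|x_1|,\ldots,|x_n|$; $K_l\in\{0,\ldots,n_l-1\}$, $\gamma_l>0$, $n_0\ge0$. $\delta_{\mathcal C}$ is the indicator function of $\mathcal{C}$ (0 on $\mathcal C$, $+\infty$ outside); $f$ takes values in $(-\infty,\infty]$ and $\mathrm{dom} f=\{x\mid f(x)<\infty\}$. $e_i$ is the $i$-th unit vector. Feasible cone: $\mathcal{F}(x;\mathcal{C})=\{d\mid \exists\varsigma'>0:\ x+\varsigma d\in\mathcal{C}\ \forall\varsigma\in(0,\varsigma')\}$ for $x\in\mathcal C$. Directional derivative $h'(x;d)=\lim_{\varsigma\searrow0}(h(x+\varsigma d)-h(x))/\varsigma$; directional differentiability means it exists in $\mathbb{R}$ for $x\in\mathrm{dom}\,h$, $d\in\mathcal F(x;\mathrm{dom}\,h)$. $x^*$ is d-stationary if the objective's directional derivative at $x^*$ is $\ge0$ for all $d\in\mathcal{F}(x^*;\mathcal{C})$. *)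

From HB Require Import structures.
From mathcomp Require Import all_boot all_order all_algebra.
From mathcomp Require Import all_classical all_reals all_analysis.
Set Implicit Arguments. Unset Strict Implicit. Unset Printing Implicit Defensive.
Import Order.TTheory GRing.Theory Num.Theory.
Import numFieldNormedType.Exports.
Local Open Scope classical_set_scope.
Local Open Scope ring_scope.

Definition blockvec (R : realType) (L : nat) (n : 'I_L.+1 -> nat) : Type :=
  forall l : 'I_L.+1, 'I_(n l) -> R.

Definition bv_step (R : realType) L (n : 'I_L.+1 -> nat)
  (x d : blockvec R n) (s : R) : blockvec R n :=
  fun l i => x l i + s * d l i.

Definition Ttrim (R : realType) (n K : nat) (x : 'I_n -> R) : R :=
  \sum_(a <- take (n - K) (sort (fun a b : R => a <= b) [seq `|x i| | i <- enum 'I_n])) a.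

Definition delta_ind (R : realType) (T : Type) (C : set T) (x : T) : \bar R :=
  if `[< C x >] then 0%E else +oo%E.

Definition edom (T : Type) (R : realType) (h : T -> \bar R) : set T :=
  [set x | (h x < +oo)%E].

Definition feas (R : realType) L (n : 'I_L.+1 -> nat)
  (C : set (blockvec R n)) (x : blockvec R n) : set (blockvec R n) :=
  [set d | exists2 s' : R, 0 < s' & forall s : R, 0 < s < s' -> C (bv_step x d s)].

Definition hasDirDeriv (R : realType) L (n : 'I_L.+1 -> nat)
  (h : blockvec R n -> \bar R) (x d : blockvec R n) (v : R) : Prop :=
  (fun s : R => ((h (bv_step x d s) - h x) * (s^-1)%:E)%E) @ at_right (0:R) --> v%:E.

Definition dir_differentiable (R : realType) L (n : 'I_L.+1 -> nat)
  (h : blockvec R n -> \bar R) : Prop :=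
  forall x, edom h x -> forall d, feas (edom h) x d -> exists v : R, hasDirDeriv h x d v.

Definition in_block (R : realType) L (n : 'I_L.+1 -> nat) (l : 'I_L.+1)
  (d : blockvec R n) : Prop :=
  forall l' : 'I_L.+1, l' != l -> forall j : 'I_(n l'), d l' j = 0.

Definition objective (R : realType) L (n : 'I_L.+1 -> nat) (K : 'I_L.+1 -> nat)
  (gamma : 'I_L.+1 -> R) (f : blockvec R n -> \bar R) (C : set (blockvec R n))
  (x : blockvec R n) : \bar R :=
  (f x + (\sum_(l < L.+1 | (0 < l)%N) gamma l * Ttrim (K l) (x l))%:E + delta_ind R C x)%E.

From HB Require Import structures.
From mathcomp Require Import all_boot all_order all_algebra.
From mathcomp Require Import all_classical all_reals all_analysis.
From mathcomp Require Import ring.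
Set Implicit Arguments. Unset Strict Implicit. Unset Printing Implicit Defensive.
Import Order.TTheory GRing.Theory Num.Theory.
Import numFieldNormedType.Exports.
Local Open Scope classical_set_scope.
Local Open Scope ring_scope.

(* If T_{K,n,1}(x_l^* ) were positive, some coordinate i of x_l^* with |x_i| > 0
   would be among the n - K smallest in absolute value.  Moving along the unit
   direction d = -sgn(x_i) e_i (feasible by (B1), scaled) lowers |x_i| and hence
   T exactly at unit rate for short steps, so the objective's directional
   derivative along d is (f + delta_C)'(x^*; d) - gamma_l <= Gamma_l - gamma_l < 0
   by (B2), contradicting d-stationarity. *)

Lemma big_take_set_nth (V : zmodType) (s : seq V) (k z : nat) (v : V) :
  (z < k <= size s)%N ->
  \sum_(a <- take k (set_nth 0 s z v)) a = \sum_(a <- take k s) a + v - s`_z.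
Proof.
elim: s k z => [|a s IHs] [|k] [|z] //=; rewrite ?ltnS => hzk.
- by rewrite ltn0 andbF in hzk.
- by rewrite !big_cons addrAC [a + _]addrC addrK addrC.
- by rewrite !big_cons IHs // !addrA.
Qed.

Lemma sort_set_nth (d : Order.disp_t) (T : orderType d) (x0 : T) (s : seq T) (z : nat) :
  (z < size s)%N -> exists p, [/\ (p < size s)%N, nth x0 s p = nth x0 (sort <=%O s) z &
    forall v, sorted <=%O (set_nth x0 (sort <=%O s) z v) ->
      sort <=%O (set_nth x0 s p v) = set_nth x0 (sort <=%O s) z v].
Proof.
move=> zs; have [Is pIs sortE] := perm_iota_sort <=%O x0 s.
have sIs : size Is = size s by rewrite (perm_size pIs) size_iota.
have IsE k : (k < size s)%N -> (nth 0 Is k < size s)%N.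
  by move=> ks; have := mem_nth 0 (_ : (k < size Is)%N); rewrite sIs (perm_mem pIs) mem_iota; apply.
exists (nth 0 Is z); split; first exact: IsE.
  by rewrite sortE (nth_map 0) ?sIs.
move=> v sorted_v; set s' := set_nth x0 s _ v.
apply: (sorted_eq le_trans le_anti); rewrite ?sort_sorted //; first exact: le_total.
have -> : set_nth x0 (sort <=%O s) z v = map (nth x0 s') Is.
  apply: (@eq_from_nth _ x0); first by rewrite size_set_nth size_map size_sort sIs; apply/maxn_idPr.
  move=> k; rewrite size_set_nth size_sort (maxn_idPr zs) => ks.
  rewrite nth_set_nth (nth_map 0) ?sIs // nth_set_nth /= sortE (nth_map 0) ?sIs //.
  by rewrite nth_uniq ?sIs // (perm_uniq pIs) iota_uniq.
have ss' : size s' = size s by rewrite size_set_nth; exact/maxn_idPr/IsE.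
rewrite perm_sort perm_sym; have := perm_map (nth x0 s') pIs.
by rewrite -ss' map_nth_iota0 // take_size.
Qed.

Lemma sorted_set_nth (d : Order.disp_t) (T : orderType d) (x0 : T) (s : seq T)
    (z : nat) (v : T) :
  sorted <=%O s -> (z < size s)%N ->
  ((0 < z)%N -> (nth x0 s z.-1 <= v)%O) -> (v <= nth x0 s z)%O ->
  sorted <=%O (set_nth x0 s z v).
Proof.
move=> /(sortedP x0) sorted_s zs lev lve; apply/(sortedP x0) => k.
rewrite size_set_nth (maxn_idPr zs) => ks; rewrite !nth_set_nth /=.
have := sorted_s k ks; case: (eqVneq k z) => [->|_].
  by rewrite (gtn_eqF (ltnSn z)); exact: le_trans.
by case: (eqVneq k.+1 z) => [kz|_] // _; rewrite -kz in lev; exact: lev.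
Qed.

Lemma find_gt0_lt_take (R : numDomainType) (s : seq R) (k : nat) :
  (k <= size s)%N -> all (fun a : R => 0 <= a) s -> \sum_(a <- take k s) a != 0 ->
  (find (fun a : R => 0 < a)%R s < k)%N.
Proof.
move=> ks s_ge0; rewrite -has_take_leq //; apply: contraR => /hasPn take_le0.
rewrite big_seq big1 // => a a_take; have a_ge0 := allP s_ge0 a (mem_take a_take).
by apply/eqP; move: (take_le0 a a_take); rewrite lt0r a_ge0 andbT negbK.
Qed.

(* [i] is the coordinate holding the smallest positive value among the [N - K]
   kept ones: lowering [|x i|] by [t < |x i|] does not change the sorted order,
   so the trimmed sum drops by exactly [t]. *)
Lemma Ttrim_shrink_coord (R : realType) (N K : nat) (x : 'I_N -> R) :
  Ttrim K x != 0 -> exists i : 'I_N, 0 < `|x i| /\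
  forall (y : 'I_N -> R) (t : R), 0 < t < `|x i| ->
    (forall j, j != i -> y j = x j) -> `|y i| = `|x i| - t ->
    Ttrim K y = Ttrim K x - t.
Proof.
rewrite /Ttrim; set w := [seq `|x j| | j <- enum 'I_N]; set sw := sort _ w => T_neq0.
have sw_ge0 : all (fun a : R => 0 <= a) sw by rewrite all_sort all_map; apply/allP => j _ /=.
have size_w : size w = N by rewrite size_map size_enum_ord.
have size_sw : size sw = N by rewrite size_sort.
have zK : (find (fun a : R => 0 < a)%R sw < N - K)%N.
  by apply: find_gt0_lt_take; rewrite ?size_sw ?leq_subr.
set z := find _ sw in zK.
have zN : (z < size w)%N by rewrite size_w (leq_trans zK) ?leq_subr.
have [p [pw wp sortE]] := sort_set_nth 0 zN; rewrite -[sort <=%O w]/sw in wp sortE.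
have sw_z_gt0 : 0 < sw`_z.
  by apply: (@nth_find _ 0 (fun a : R => 0 < a)); rewrite has_find size_sw (leq_trans zK) ?leq_subr.
rewrite size_w in pw; exists (Ordinal pw).
have wE (y : 'I_N -> R) (j : 'I_N) : [seq `|y k| | k <- enum 'I_N]`_j = `|y j|.
  by rewrite (nth_map j) ?size_enum_ord // nth_ord_enum.
have xp : `|x (Ordinal pw)| = sw`_z by rewrite -wp -(wE x).
rewrite xp; split=> // y t /andP[t_gt0 t_lt] yE yp.
have yw : [seq `|y k| | k <- enum 'I_N] = set_nth 0 w p (sw`_z - t).
  apply: (@eq_from_nth _ 0) => [|k].
    by rewrite size_set_nth size_map size_enum_ord size_w (maxn_idPr pw).
  rewrite size_map size_enum_ord => kN; rewrite nth_set_nth /= (wE y (Ordinal kN)).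
  case: eqP => [kp|kp]; first by rewrite -yp; congr `|y _|; apply: val_inj.
  by rewrite yE -?(wE x (Ordinal kN)) //; apply/eqP => /(congr1 val).
rewrite yw sortE.
  by rewrite big_take_set_nth ?zK ?size_sw ?leq_subr // addrA addrAC addrK.
apply: sorted_set_nth; rewrite ?size_sw -?size_w //.
- by apply: sort_sorted; exact: le_total.
- move=> z_gt0; apply: (@le_trans _ _ 0); last by rewrite subr_ge0 ltW.
  by rewrite leNgt before_find // prednK.
- by rewrite lerBlDr lerDl ltW.
Qed.

Section BlockDirections.
Variables (R : realType) (L : nat) (n : 'I_L.+1 -> nat).
Implicit Types (x d : blockvec R n) (C : set (blockvec R n)).

Lemma feas_scale C x d (c : R) : 0 < c -> feas C x d -> feas C x (fun l j => c * d l j).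
Proof.
move=> c_gt0 [s0 s0_gt0 sC]; exists (s0 / c) => [|s /andP[s_gt0 s_lt]]; first exact: divr_gt0.
have -> : bv_step x (fun l j => c * d l j) s = bv_step x d (s * c).
  by apply: functional_extensionality_dep => l; apply: funext => j; rewrite /bv_step mulrA.
by apply: sC; rewrite mulr_gt0 //= -ltr_pdivlMr.
Qed.

Lemma feas_subset C D x d : C `<=` D -> feas C x d -> feas D x d.
Proof. by move=> CD [s0 s0_gt0 sC]; exists s0 => // s /sC/CD. Qed.

Lemma hasDirDeriv_add_ray_affine (h : blockvec R n -> \bar R) (P : blockvec R n -> R) x d (v c : R) :
  h x \is a fin_num -> hasDirDeriv h x d v ->
  (\forall s \near at_right (0 : R), P (bv_step x d s) = P x - c * s) ->
  hasDirDeriv (fun y => h y + (P y)%:E)%E x d (v - c).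
Proof.
move=> /fineK hxE hv P_step; rewrite /hasDirDeriv EFinB.
apply: cvg_trans (cvgeD _ hv (cvg_cst (- c)%:E)) => //; apply: near_eq_cvg.
near=> s; have s_gt0 : 0 < s by near: s; exact: nbhs_right_gt.
have s_inv_gt0 : (0 < (s^-1)%:E)%E by rewrite lte_fin invr_gt0.
rewrite /= (near P_step s) //; rewrite -hxE; case: (h _) => [a||] /=.
- by rewrite -!EFinD -!EFinM; congr EFin; field; exact: lt0r_neq0.
- by rewrite !addye // !gt0_mulye.
- by rewrite !addNye !gt0_mulNye.
Unshelve. all: by end_near.
Qed.

Definition bv_coord (l : 'I_L.+1) (i : 'I_(n l)) (a : R) : blockvec R n :=
  fun l' j => if (l' == l) && (val j == val i) then a else 0.
Arguments bv_coord : clear implicits.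

Lemma bv_coord_in_block l i a : in_block l (bv_coord l i a).
Proof. by move=> l' /negbTE l'l j; rewrite /bv_coord l'l. Qed.

Lemma bv_coord_block l i a j : bv_coord l i a l j = if j == i then a else 0.
Proof. by rewrite /bv_coord eqxx. Qed.

Lemma bv_coord_scale l i (a c : R) :
  (fun l' j => c * bv_coord l i a l' j) = bv_coord l i (c * a).
Proof.
apply: functional_extensionality_dep => l'; apply: funext => j.
by rewrite /bv_coord; case: ifP; rewrite ?mulr0.
Qed.

Lemma bv_step_coord_out l i a x (s : R) l' :
  l' != l -> (bv_step x (bv_coord l i a) s : blockvec R n) l' = x l'.
Proof. by move=> /negbTE l'l; apply: funext => j; rewrite /bv_step /bv_coord l'l mulr0 addr0. Qed.

Lemma feas_coord_sgN C x l i :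
  x l i != 0 -> feas C x (bv_coord l i (- x l i)) ->
  feas C x (bv_coord l i (- Num.sg (x l i))).
Proof.
move=> xi_neq0 /(feas_scale (c := `|x l i|^-1)); rewrite bv_coord_scale invr_gt0 normr_gt0.
have -> : `|x l i|^-1 * - x l i = - Num.sg (x l i).
  by rewrite mulrN mulrC {1}(numEsg (x l i)) mulfK ?normr_eq0.
exact.
Qed.

Lemma bv_coord_sgN_entry l i (a : R) j : bv_coord l i (- Num.sg a) l j \in [:: -1; 0; 1].
Proof.
rewrite bv_coord_block; case: eqP => _; last by rewrite !inE eqxx orbT.
by case: sgrP => _; rewrite ?oppr0 ?opprK !inE eqxx ?orbT.
Qed.

Lemma bv_coord_norm1 l i (a : R) : `|a| = 1 -> \sum_j `|bv_coord l i a l j| = 1.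
Proof.
move=> a_norm; rewrite (bigD1 i) // big1 => [|j /negbTE ji].
  by rewrite bv_coord_block eqxx a_norm /= addr0.
by rewrite bv_coord_block ji normr0.
Qed.

End BlockDirections.
Arguments bv_coord {R L n} l i a.

Section Penalty.
Variables (R : realType) (L : nat) (n K : 'I_L.+1 -> nat) (gamma : 'I_L.+1 -> R).

Definition trim_penalty (x : blockvec R n) : R :=
  \sum_(l < L.+1 | (0 < l)%N) gamma l * Ttrim (K l) (x l).

Lemma objectiveE (f : blockvec R n -> \bar R) (C : set (blockvec R n)) :
  objective K gamma f C = (fun x => f x + delta_ind R C x + (trim_penalty x)%:E)%E.
Proof. by apply: funext => x; rewrite /objective /trim_penalty addeAC. Qed.

Lemma trim_penalty_block_update (x y : blockvec R n) (l : 'I_L.+1) :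
  (0 < l)%N -> (forall l', l' != l -> y l' = x l') ->
  trim_penalty y = trim_penalty x + gamma l * (Ttrim (K l) (y l) - Ttrim (K l) (x l)).
Proof.
move=> l_gt0 yx; rewrite /trim_penalty (bigD1 l) // [in RHS](bigD1 l) //=.
rewrite (eq_bigr (fun l' => gamma l' * Ttrim (K l') (x l'))) => [|l' /andP[_ l'l]].
  by ring.
by rewrite yx.
Qed.

End Penalty.

Lemma delta_ind_mem (R : realType) T (C : set T) x : C x -> delta_ind R C x = 0%E.
Proof. by move=> Cx; rewrite /delta_ind asboolT. Qed.

Theorem mainTheorem11 (R : realType) (L : nat) (n : 'I_L.+1 -> nat)
  (K : 'I_L.+1 -> nat) (gamma : 'I_L.+1 -> R)
  (f : blockvec R n -> \bar R) (C : set (blockvec R n)) (xs : blockvec R n)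
  (l : 'I_L.+1) (Gam : R) :
  (forall l' : 'I_L.+1, (0 < l')%N -> (K l' < n l')%N) ->
  (forall l' : 'I_L.+1, (0 < l')%N -> 0 < gamma l') ->
  (forall x, f x != -oo%E) ->
  C `<=` edom f ->
  dir_differentiable (fun x => (f x + delta_ind R C x)%E) ->
  C xs ->
  (forall d, feas C xs d ->
     forall v, hasDirDeriv (objective K gamma f C) xs d v -> 0 <= v) ->
  (0 < l)%N ->
  (forall x, C x -> forall (i : 'I_(n l)) (d : blockvec R n),
     in_block l d -> (forall j, d l j = if j == i then - x l i else 0) ->
     feas C x d) ->
  0 < Gam ->
  (forall d : blockvec R n, in_block l d ->
     (forall j, d l j \in [:: -1; 0; 1]) -> \sum_j `|d l j| = 1 ->
     feas C xs d ->
     forall v, hasDirDeriv (fun x => (f x + delta_ind R C x)%E) xs d v -> v <= Gam) ->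
  gamma l > Gam ->
  Ttrim (K l) (xs l) = 0.
Proof.
move=> _ _ f_finite C_dom_f h_dd C_xs stationary l_gt0 B1 _ B2 Gam_lt.
apply/eqP; apply: contraT => T_neq0.
have [i [xi_gt0 Ttrim_shrink]] := Ttrim_shrink_coord T_neq0.
set m := `|xs l i| in xi_gt0 Ttrim_shrink.
have xi_neq0 : xs l i != 0 by rewrite -normr_gt0.
set h := fun x => (f x + delta_ind R C x)%E.
have h_C x : C x -> h x = f x by move=> Cx; rewrite /h delta_ind_mem ?adde0.
have C_dom_h : C `<=` edom h by move=> x Cx; rewrite /edom /= h_C //; exact: C_dom_f.
set d := bv_coord l i (- Num.sg (xs l i)).
have d_feas : feas C xs d.
  by apply/feas_coord_sgN/B1 => //; [exact: bv_coord_in_block | exact: bv_coord_block].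
have [v hv] := h_dd xs (C_dom_h _ C_xs) d (feas_subset C_dom_h d_feas).
have v_le : v <= Gam.
  apply: (B2 d) => //; [exact: bv_coord_in_block | exact: bv_coord_sgN_entry |].
  by rewrite bv_coord_norm1 // normrN normr_sg xi_neq0.
suff : 0 <= v - gamma l by rewrite subr_ge0 => /le_trans/(_ v_le); rewrite leNgt Gam_lt.
apply: (stationary d d_feas); rewrite objectiveE; apply: hasDirDeriv_add_ray_affine => //.
  by rewrite -/(h xs) h_C // fin_numE f_finite (lt_eqF (C_dom_f _ C_xs)).
near=> s; have s_gt0 : 0 < s by near: s; exact: nbhs_right_gt.
have s_lt_m : s < m by near: s; exact: nbhs_right_lt.
rewrite (trim_penalty_block_update _ _ l_gt0 (bv_step_coord_out _ _ _ _)).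
rewrite (Ttrim_shrink _ s) ?s_gt0 // => [|j /negbTE ji|]; first by rewrite addrAC subrr add0r mulrN.
  by rewrite /bv_step /d bv_coord_block ji mulr0 addr0.
rewrite /bv_step /d bv_coord_block eqxx mulrN {1}(numEsg (xs l i)) [s * _]mulrC -mulrBr.
by rewrite normrM normr_sg xi_neq0 mul1r ger0_norm // subr_ge0 ltW.
Unshelve. all: by end_near.
Qed.
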